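(* Let $\delta\in(0,1)$, $A>0$, $D>0$, $B>0$, and define $H(z)=Az-Bz^{1+\delta}-Dz^{1-\delta}$ for $z>0$, and $H^{\max}=\sup_{z>0}H(z)$. Then: (a) for $B\in(0,A^2/(4D))$ we have $H^{\max}>0$, the set $\{z>0: H(z)>0\}$ is an interval $(\mu,\nu)$, and $H^{\max}=H(z_0)$ for some $z_0\in(\mu,\nu)$; (b) $H^{\max}\to0^+$ and $\nu-\mu\to0^+$ as $B\to (A^2/(4D))^-$; (c) for every $p>0$ there is $B(p)\in(0,A^2/(4D))$ such that $H^{\max}=p$ when $B=B(p)$, and $B(p)\to A^2/(4D)$ as $p\to0^+$.
   Context: Here $\mu=\mu(B)$, $\nu=\nu(B)$ depend on $B$ (with $A,D,\delta$ fixed). *)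

From HB Require Import structures.
From mathcomp Require Import all_boot all_order all_algebra.
From mathcomp Require Import all_classical all_reals all_analysis.
Set Implicit Arguments. Unset Strict Implicit. Unset Printing Implicit Defensive.
Import Order.TTheory GRing.Theory Num.Theory.
Import numFieldNormedType.Exports.
Local Open Scope classical_set_scope.
Local Open Scope ring_scope.

Definition Hfun (R : realType) (A B D delta z : R) : R :=
  A * z - B * z `^ (1 + delta) - D * z `^ (1 - delta).

Definition Hmax (R : realType) (A B D delta : R) : R :=
  sup [set Hfun A B D delta z | z in [set z : R | 0 < z]].

From HB Require Import structures.
From mathcomp Require Import all_boot all_order all_algebra.
From mathcomp Require Import all_classical all_reals all_analysis.
From mathcomp Require Import ring lra.
Import Order.TTheory GRing.Theory Num.Theory.
Import numFieldNormedType.Exports.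
Local Open Scope classical_set_scope.
Local Open Scope ring_scope.

(* With w = z ^ delta, H(z) = z ^ (1 - delta) * q(w) for the quadratic
   q(w) = A w - B w^2 - D, whose discriminant A^2 - 4 B D is positive exactly
   when B < A^2 / (4 D).  So H > 0 exactly for z between mu = w_-^(1/delta)
   and nu = w_+^(1/delta), w_- < w_+ the roots of q, and by compactness H
   attains a positive maximum there.  As B tends to A^2 / (4 D) the roots
   merge, giving nu - mu -> 0, and max q = A^2 / (4 B) - D -> 0 forces
   H^max -> 0.  Since H is affine in B, B |-> H^max is nonincreasing and
   locally Lipschitz; it exceeds any p for small B, so the intermediate value
   theorem yields B(p), and monotonicity gives B(p) -> A^2 / (4 D) as p -> 0. *)

Section general_facts.
Context {R : realType}.

Lemma continuous_powR (r z : R) : 0 < z -> {for z, continuous (fun x : R => x `^ r)}.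
Proof.
move=> z0; apply/differentiable_continuous/derivable1_diffP/derivable_powR.
by rewrite in_itv /= z0.
Qed.

Lemma powRVK (d z : R) : d != 0 -> 0 <= z -> (z `^ d^-1) `^ d = z.
Proof. by move=> d0 z0; rewrite -powRrM mulVf // powRr1. Qed.

Lemma ler_powR2 (r : R) : 0 < r ->
  {in Num.nneg &, {mono (fun x : R => x `^ r) : x y / x <= y}}.
Proof. by move=> r0; apply: le_mono_in; exact: gt0_ltr_powR. Qed.

Lemma ltr_powR2 (r : R) : 0 < r ->
  {in Num.nneg &, {mono (fun x : R => x `^ r) : x y / x < y}}.
Proof. by move=> r0; apply: leW_mono_in; exact: ler_powR2. Qed.

Lemma between_mul_gt0 (a b w : R) : a <= b -> (0 < (w - a) * (b - w)) = (a < w < b).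
Proof.
move=> ab; apply/idP/andP => [h|[aw wb]]; last by rewrite mulr_gt0 // subr_gt0.
by split; nra.
Qed.

Lemma sup_image_argmax {T : Type} {P : set T} {f : T -> R} {z0 : T} :
  P z0 -> (forall z, P z -> f z <= f z0) -> sup (f @` P) = f z0.
Proof.
move=> Pz0 fz0; apply/le_anti/andP; split.
  by apply: ge_sup; [exists (f z0), z0 | move=> _ [z Pz <-]; exact: fz0].
apply: ub_le_sup; last by exists z0.
by exists (f z0) => _ [z Pz <-]; exact: fz0.
Qed.

Lemma cvgr0_at_right {T : Type} (F : set_system T) {FF : Filter F} (f : T -> R) :
  f @ F --> 0 -> (\forall x \near F, 0 < f x) -> f @ F --> 0^'+.
Proof.
move=> f0 fpos P /= P0; have : F (fun x => 0 < f x -> P (f x)) by exact: f0 P0.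
by move=> fP; apply: filterS2 fP fpos => x; apply.
Qed.

Lemma Hfun_factor (A B D d z : R) : 0 < z ->
  Hfun A B D d z = z / z `^ d * (A * z `^ d - B * (z `^ d) ^+ 2 - D).
Proof.
move=> z0; have zd0 : z `^ d != 0 by rewrite gt_eqF ?powR_gt0.
rewrite /Hfun (@powRD _ z 1 d) ?(@powRD _ z 1 (- d)) ?(gt_eqF z0) ?implybT //.
by rewrite powRN powRr1 ?ltW //; field.
Qed.

Lemma HfunB (A B B' D d z : R) : 0 < z ->
  Hfun A B' D d z = Hfun A B D d z - (B' - B) * (z * z `^ d).
Proof.
move=> z0; rewrite /Hfun (@powRD _ z 1 d) ?(gt_eqF z0) ?implybT //.
by rewrite powRr1 ?ltW //; ring.
Qed.

Lemma continuous_Hfun (A B D d z : R) : 0 < z -> {for z, continuous (Hfun A B D d)}.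
Proof.
move=> z0; apply: continuousB; first apply: continuousB.
- by apply: continuousM; [exact: cst_continuous | exact: cvg_id].
- by apply: continuousM; [exact: cst_continuous | exact: continuous_powR].
- by apply: continuousM; [exact: cst_continuous | exact: continuous_powR].
Qed.

Lemma near_lipschitz_continuous (f : R -> R) (k x : R) :
  (\forall y \near x, `|f x - f y| <= k * `|x - y|) -> {for x, continuous f}.
Proof.
move=> fk; apply/cvgrPdist_lt => e e0.
have k1_gt0 : 0 < `|k| + 1 by rewrite ltr_pwDr.
have d_gt0 : 0 < e / (`|k| + 1) by rewrite divr_gt0.
near=> y; apply: (@le_lt_trans _ _ (k * `|x - y|)); first by near: y.
have xy_lt : `|x - y| < e / (`|k| + 1).
  by near: y; exact: (@cvgr_dist_lt _ _ _ (nbhs x) _ id x cvg_id).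
rewrite ltr_pdivlMr // in xy_lt; apply: le_lt_trans xy_lt.
by rewrite mulrC ler_wpM2l // (le_trans (ler_norm k)) // lerDl.
Unshelve. all: end_near. Qed.
End general_facts.

Section profile.
Context {R : realType}.
Variables (delta A D : R).
Hypotheses (delta_gt0 : 0 < delta) (A_gt0 : 0 < A) (D_gt0 : 0 < D).

Local Notation H B := (Hfun A B D delta).
Local Notation Hm B := (Hmax A B D delta).

Definition Bcrit := A ^+ 2 / (4 * D).
Definition sdisc B := Num.sqrt (A ^+ 2 - 4 * B * D).
Definition wlo B := (A - sdisc B) / (2 * B).
Definition whi B := (A + sdisc B) / (2 * B).
Definition mu B := wlo B `^ delta^-1.
Definition nu B := whi B `^ delta^-1.

Lemma Bcrit_gt0 : 0 < Bcrit.
Proof. by rewrite divr_gt0 ?exprn_gt0 ?mulr_gt0. Qed.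

Section fixed_B.
Context {B : R}.
Hypotheses (B_gt0 : 0 < B) (B_lt_crit : B < Bcrit).

Lemma disc_gt0 : 0 < A ^+ 2 - 4 * B * D.
Proof.
by move: B_lt_crit; rewrite subr_gt0 ltr_pdivlMr ?mulr_gt0 // mulrAC mulrC.
Qed.

Lemma sdisc_gt0 : 0 < sdisc B.
Proof. by rewrite sqrtr_gt0 disc_gt0. Qed.

Lemma sqr_sdisc : sdisc B ^+ 2 = A ^+ 2 - 4 * B * D.
Proof. by rewrite sqr_sqrtr // ltW // disc_gt0. Qed.

Lemma sdisc_ltA : sdisc B < A.
Proof.
have BD_gt0 : 0 < 4 * B * D by rewrite !mulr_gt0.
rewrite -(@ltr_pXn2r _ 2) ?nnegrE ?ltW ?sdisc_gt0 // sqr_sdisc; lra.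
Qed.

Lemma wlo_gt0 : 0 < wlo B.
Proof. by rewrite divr_gt0 ?mulr_gt0 // subr_gt0 sdisc_ltA. Qed.

Lemma wlo_lt_whi : wlo B < whi B.
Proof. by rewrite ltr_pM2r ?invr_gt0 ?mulr_gt0 //; have := sdisc_gt0; lra. Qed.

Lemma whi_lt : whi B < A / B.
Proof.
rewrite ltr_pdivrMr ?mulr_gt0 // mulrA mulrAC divfK ?gt_eqF //.
by have := sdisc_ltA; lra.
Qed.

Lemma quad_factor w : A * w - B * w ^+ 2 - D = B * ((w - wlo B) * (whi B - w)).
Proof.
have -> : D = (A ^+ 2 - sdisc B ^+ 2) / (4 * B).
  by rewrite sqr_sdisc; field; rewrite gt_eqF.
by rewrite /wlo /whi; field; rewrite gt_eqF.
Qed.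

Lemma quad_gt0 w : (0 < A * w - B * w ^+ 2 - D) = (wlo B < w < whi B).
Proof. by rewrite quad_factor pmulr_rgt0 // between_mul_gt0 // ltW // wlo_lt_whi. Qed.

Lemma quad_le w : A * w - B * w ^+ 2 - D <= A ^+ 2 / (4 * B) - D.
Proof.
rewrite lerD2r -subr_ge0.
have -> : A ^+ 2 / (4 * B) - (A * w - B * w ^+ 2) = B * (w - A / (2 * B)) ^+ 2.
  by field; rewrite gt_eqF.
by rewrite mulr_ge0 ?sqr_ge0 ?ltW.
Qed.

Lemma mu_gt0 : 0 < mu B.
Proof. by rewrite powR_gt0 // wlo_gt0. Qed.

Lemma mu_lt_nu : mu B < nu B.
Proof.
have whi_gt0 := lt_trans wlo_gt0 wlo_lt_whi.
by rewrite ltr_powR2 ?invr_gt0 ?nnegrE ?ltW ?wlo_gt0 ?wlo_lt_whi.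
Qed.

Lemma Hfun_gt0 z : 0 < z -> (0 < H B z) = (mu B < z < nu B).
Proof.
move=> z0; have zd0 : 0 < z `^ delta by rewrite powR_gt0.
have whi_gt0 := lt_trans wlo_gt0 wlo_lt_whi.
have pow_delta w : 0 <= w -> (w `^ delta^-1) `^ delta = w.
  by move=> w0; rewrite powRVK ?gt_eqF.
rewrite Hfun_factor // pmulr_rgt0 ?divr_gt0 // quad_gt0.
rewrite -[mu B < z](ltr_powR2 _ delta_gt0) ?nnegrE ?powR_ge0 ?ltW //.
rewrite -[z < nu B](ltr_powR2 _ delta_gt0) ?nnegrE ?powR_ge0 ?ltW //.
by rewrite !pow_delta ?ltW ?wlo_gt0.
Qed.

Lemma Hfun_pos_set : [set z : R | 0 < z /\ 0 < H B z] = `]mu B, nu B[%classic.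
Proof.
apply/seteqP; split => z /=; rewrite in_itv /=; first by case=> z0; rewrite Hfun_gt0.
move=> zin; have z0 : 0 < z by rewrite (lt_trans mu_gt0) //; case/andP: zin.
by rewrite Hfun_gt0.
Qed.

Lemma Hfun_argmax : exists2 z0, mu B < z0 < nu B & forall z, 0 < z -> H B z <= H B z0.
Proof.
have [z0 z0in z0max] : exists2 z0, z0 \in `[mu B, nu B] &
    forall z, z \in `[mu B, nu B] -> H B z <= H B z0.
  apply: EVT_max; first exact/ltW/mu_lt_nu.
  apply: continuous_in_subspaceT => z; rewrite inE /= in_itv /= => /andP[muz _].
  by apply: continuous_Hfun; rewrite (lt_le_trans mu_gt0).
set m := (mu B + nu B) / 2.
have [m_gt_mu m_lt_nu] : mu B < m /\ m < nu B by have := mu_lt_nu; rewrite /m; lra.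
have Hmid_gt0 : 0 < H B m by rewrite Hfun_gt0 ?m_gt_mu ?m_lt_nu // (lt_trans mu_gt0).
have Hz0_gt0 : 0 < H B z0 by rewrite (lt_le_trans Hmid_gt0) // z0max // in_itv /= !ltW.
have z0_gt0 : 0 < z0 by move: z0in; rewrite in_itv /= => /andP[/(lt_le_trans mu_gt0)].
exists z0; first by rewrite -Hfun_gt0.
move=> z z_gt0; have [zin|zout] := boolP (mu B < z < nu B).
  by apply: z0max; case/andP: zin => ? ?; rewrite in_itv /= !ltW.
by rewrite (le_trans _ (ltW Hz0_gt0)) // leNgt Hfun_gt0.
Qed.

Lemma Hmax_attained : exists2 z0, mu B < z0 < nu B & Hm B = H B z0.
Proof.
have [z0 z0in z0max] := Hfun_argmax; exists z0 => //.
by apply: sup_image_argmax z0max; rewrite /= (lt_trans mu_gt0) //; case/andP: z0in.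
Qed.

Lemma Hmax_gt0 : 0 < Hm B.
Proof.
have [z0 z0in ->] := Hmax_attained.
by rewrite Hfun_gt0 // (lt_trans mu_gt0) //; case/andP: z0in.
Qed.

Lemma Hfun_le_Hmax z : 0 < z -> H B z <= Hm B.
Proof.
have [z0 z0in z0max] := Hfun_argmax.
rewrite [Hm B](sup_image_argmax _ z0max); first exact: z0max.
by rewrite /= (lt_trans mu_gt0) //; case/andP: z0in.
Qed.

Lemma Hmax_le : Hm B <= nu B / wlo B * (A ^+ 2 / (4 * B) - D).
Proof.
have [z0 z0in ->] := Hmax_attained; have /andP[mu_z0 z0_nu] := z0in.
have z0_gt0 := lt_trans mu_gt0 mu_z0.
have zd_gt0 : 0 < z0 `^ delta by rewrite powR_gt0.
have := z0in; rewrite -Hfun_gt0 // Hfun_factor // pmulr_rgt0 ?divr_gt0 // => q_gt0.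
have /andP[wlo_zd _] : wlo B < z0 `^ delta < whi B by rewrite -quad_gt0.
apply: ler_pM; [exact/ltW/divr_gt0 | exact: ltW | | exact: quad_le].
apply: ler_pM; [exact: ltW | by rewrite invr_ge0 ltW | exact: ltW |].
by rewrite lef_pV2 ?posrE ?ltW ?wlo_gt0.
Qed.

Lemma powR_lt_AB z : mu B < z < nu B -> z `^ delta < A / B.
Proof.
move=> zin; have z0 : 0 < z by rewrite (lt_trans mu_gt0) //; case/andP: zin.
have := zin; rewrite -Hfun_gt0 // Hfun_factor // pmulr_rgt0 ?divr_gt0 ?powR_gt0 //.
by rewrite quad_gt0 => /andP[_ /lt_trans]; apply; exact: whi_lt.
Qed.

End fixed_B.

Lemma Hmax_antimono {B B'} : 0 < B -> B <= B' -> B' < Bcrit -> Hm B' <= Hm B.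
Proof.
move=> B_gt0 BB' B'_lt; have B'_gt0 := lt_le_trans B_gt0 BB'.
have [z0 /andP[mu_z0 _] ->] := Hmax_attained B'_gt0 B'_lt.
have z0_gt0 := lt_trans (mu_gt0 B'_gt0 B'_lt) mu_z0.
have B_lt := le_lt_trans BB' B'_lt.
rewrite (HfunB _ B) // (le_trans _ (Hfun_le_Hmax B_gt0 B_lt z0 z0_gt0)) //.
by rewrite gerBl mulr_ge0 ?subr_ge0 // mulr_ge0 ?powR_ge0 ?ltW.
Qed.

(* For B >= b this bounds z * z ^ delta on ]mu B, nu B[, where z ^ delta < A / B. *)
Definition lip_bound b := (A / b) `^ delta^-1 * (A / b).

Lemma lip_bound_antimono b B : 0 < b -> b <= B -> lip_bound B <= lip_bound b.
Proof.
move=> b_gt0 bB; have B_gt0 := lt_le_trans b_gt0 bB.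
have AB_le : A / B <= A / b by rewrite ler_pM2l // lef_pV2.
apply: ler_pM; [exact: powR_ge0 | by rewrite divr_ge0 ?ltW | | exact: AB_le].
by rewrite ler_powR2 ?invr_gt0 ?nnegrE ?(divr_ge0 (ltW A_gt0)) ?(ltW b_gt0) ?(ltW B_gt0).
Qed.

Lemma Hmax_sub_le {B B'} : 0 < B -> B <= B' -> B' < Bcrit ->
  Hm B - Hm B' <= (B' - B) * lip_bound B.
Proof.
move=> B_gt0 BB' B'_lt; have B_lt := le_lt_trans BB' B'_lt.
have [z0 z0in ->] := Hmax_attained B_gt0 B_lt.
have z0_gt0 : 0 < z0 by case/andP: z0in => /(lt_trans (mu_gt0 B_gt0 B_lt)).
have zd_lt := powR_lt_AB B_gt0 B_lt z0 z0in.
have z0_lt : z0 < (A / B) `^ delta^-1.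
  rewrite -(ltr_powR2 _ delta_gt0) ?nnegrE ?powR_ge0 ?ltW // powRVK ?gt_eqF //.
  by rewrite divr_ge0 ?ltW.
have := Hfun_le_Hmax (lt_le_trans B_gt0 BB') B'_lt z0 z0_gt0.
rewrite (HfunB _ B) // => HB'.
have : (B' - B) * (z0 * z0 `^ delta) <= (B' - B) * lip_bound B.
  apply: ler_wpM2l; first by rewrite subr_ge0.
  by apply: ler_pM; rewrite ?powR_ge0 ?(ltW z0_gt0) ?(ltW z0_lt) ?(ltW zd_lt).
lra.
Qed.

Lemma Hmax_lipschitz b x y : 0 < b -> b <= x -> x < Bcrit -> b <= y -> y < Bcrit ->
  `|Hm x - Hm y| <= lip_bound b * `|x - y|.
Proof.
move=> b_gt0; wlog xy : x y / x <= y => [sym bx xc byy yc|bx xc byy yc].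
  have [xy|yx] := leP x y; first exact: sym.
  by rewrite distrC [`|x - y|]distrC sym // ltW.
have x_gt0 := lt_le_trans b_gt0 bx.
rewrite ger0_norm ?subr_ge0 ?Hmax_antimono // distrC ger0_norm ?subr_ge0 //.
rewrite (le_trans (Hmax_sub_le x_gt0 xy yc)) // mulrC ler_wpM2r ?subr_ge0 //.
exact: lip_bound_antimono.
Qed.

Lemma continuous_Hmax B : 0 < B -> B < Bcrit -> {for B, continuous (fun B => Hm B)}.
Proof.
move=> B_gt0 B_lt; apply: (@near_lipschitz_continuous _ _ (lip_bound (B / 2))).
have : B \in `]B / 2, Bcrit[ by rewrite in_itv /=; apply/andP; split => //; lra.
move=> /near_in_itvoo; apply: filterS => y; rewrite in_itv /= => /andP[y_gt y_lt].
by apply: Hmax_lipschitz => //; [exact: divr_gt0 | lra | exact: ltW].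
Qed.

Lemma sdisc_cvg : sdisc B @[B --> Bcrit] --> 0.
Proof.
have -> : 0 = Num.sqrt (A ^+ 2 - 4 * Bcrit * D).
  by rewrite -[LHS]sqrtr0; congr Num.sqrt; rewrite /Bcrit; field; rewrite gt_eqF.
apply: (@cvg_comp _ _ _ (fun B => A ^+ 2 - 4 * B * D) Num.sqrt);
  last exact: sqrt_continuous.
apply: cvgB; first exact: cvg_cst.
by apply: cvgM; [apply: cvgM; [exact: cvg_cst | exact: cvg_id] | exact: cvg_cst].
Qed.

Lemma quad_root_cvg (s : R) :
  (A + s * sdisc B) / (2 * B) @[B --> Bcrit] --> A / (2 * Bcrit).
Proof.
have -> : A / (2 * Bcrit) = (A + s * 0) / (2 * Bcrit) by rewrite mulr0 addr0.
apply: cvgM.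
  by apply: cvgD; [exact: cvg_cst | apply: cvgM; [exact: cvg_cst | exact: sdisc_cvg]].
apply: cvgV; first by rewrite mulf_neq0 // gt_eqF // Bcrit_gt0.
by apply: cvgM; [exact: cvg_cst | exact: cvg_id].
Qed.

Lemma wlo_cvg : wlo B @[B --> Bcrit] --> A / (2 * Bcrit).
Proof.
have -> : wlo = fun B => (A + -1 * sdisc B) / (2 * B).
  by apply/funext => B; rewrite mulN1r.
exact: quad_root_cvg.
Qed.

Lemma whi_cvg : whi B @[B --> Bcrit] --> A / (2 * Bcrit).
Proof.
have -> : whi = fun B => (A + 1 * sdisc B) / (2 * B).
  by apply/funext => B; rewrite mul1r.
exact: quad_root_cvg.
Qed.

Lemma wcrit_gt0 : 0 < A / (2 * Bcrit).
Proof. by rewrite divr_gt0 // mulr_gt0 // Bcrit_gt0. Qed.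

Lemma mu_cvg : mu B @[B --> Bcrit] --> (A / (2 * Bcrit)) `^ delta^-1.
Proof.
apply: (@cvg_comp _ _ _ wlo (fun w => w `^ delta^-1)); first exact: wlo_cvg.
exact: continuous_powR _ _ wcrit_gt0.
Qed.

Lemma nu_cvg : nu B @[B --> Bcrit] --> (A / (2 * Bcrit)) `^ delta^-1.
Proof.
apply: (@cvg_comp _ _ _ whi (fun w => w `^ delta^-1)); first exact: whi_cvg.
exact: continuous_powR _ _ wcrit_gt0.
Qed.

Lemma near_Bcrit_left : \forall B \near Bcrit^'-, 0 < B < Bcrit.
Proof.
near=> B; apply/andP; split; last by near: B; exact: nbhs_left_lt.
by near: B; apply: nbhs_left_gt; exact: Bcrit_gt0.
Unshelve. all: end_near. Qed.

Lemma Hmax_cvg0 : Hm B @[B --> Bcrit^'-] --> 0^'+.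
Proof.
apply: cvgr0_at_right; last first.
  by apply: filterS near_Bcrit_left => B /andP[B_gt0 B_lt]; exact: Hmax_gt0.
set bound := fun B => nu B / wlo B * (A ^+ 2 / (4 * B) - D).
have bound_cvg : bound B @[B --> Bcrit] --> 0.
  have crit0 : A ^+ 2 / (4 * Bcrit) - D = 0 by rewrite /Bcrit; field; rewrite !gt_eqF.
  rewrite -(mulr0 ((A / (2 * Bcrit)) `^ delta^-1 / (A / (2 * Bcrit)))) -crit0.
  apply: cvgM.
    apply: cvgM; first exact: nu_cvg.
    by apply: cvgV; [rewrite gt_eqF // wcrit_gt0 | exact: wlo_cvg].
  apply: cvgB; last exact: cvg_cst.
  apply: cvgM; first exact: cvg_cst.
  apply: cvgV; first by rewrite mulf_neq0 // gt_eqF // Bcrit_gt0.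
  by apply: cvgM; [exact: cvg_cst | exact: cvg_id].
apply: (@squeeze_cvgr _ _ _ _ (fun=> 0) bound); last 2 first.
- exact: cvg_cst.
- exact: cvg_at_left_filter.
apply: filterS near_Bcrit_left => B /andP[B_gt0 B_lt].
by rewrite ltW ?Hmax_gt0 ?Hmax_le.
Qed.

Lemma width_cvg0 : nu B - mu B @[B --> Bcrit^'-] --> 0^'+.
Proof.
apply: cvgr0_at_right; last first.
  by apply: filterS near_Bcrit_left => B /andP[B_gt0 B_lt]; rewrite subr_gt0 mu_lt_nu.
rewrite -(subrr ((A / (2 * Bcrit)) `^ delta^-1)).
by apply: cvg_at_left_filter; apply: cvgB; [exact: nu_cvg | exact: mu_cvg].
Qed.

Lemma Hfun0_unbounded p : exists2 z, 0 < z & p < Hfun A 0 D delta z.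
Proof.
have DA_ge0 : 0 <= 2 * D / A by rewrite divr_ge0 ?mulr_ge0 ?ltW.
have p_lt : p < `|p| + 1 by rewrite (le_lt_trans (ler_norm p)) // ltrDl.
set z := 2 * (`|p| + 1) / A + (2 * D / A) `^ delta^-1.
have zA : `|p| + 1 <= A * z / 2.
  have -> : A * z / 2 = `|p| + 1 + A * (2 * D / A) `^ delta^-1 / 2.
    by rewrite /z; field; rewrite gt_eqF.
  by rewrite lerDl divr_ge0 ?mulr_ge0 ?powR_ge0 ?ltW.
have z_gt0 : 0 < z.
  have : 0 < 2 * (`|p| + 1) / A by rewrite divr_gt0 ?mulr_gt0 ?ltr_pwDr.
  by have := powR_ge0 (2 * D / A) delta^-1; rewrite /z; lra.
have w_gt0 : 0 < z `^ delta by rewrite powR_gt0.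
have wD : 2 * D / A <= z `^ delta.
  rewrite -[leLHS](powRVK _ _ (lt0r_neq0 delta_gt0) DA_ge0).
  rewrite ler_powR2 ?nnegrE ?powR_ge0 ?(ltW z_gt0) // /z lerDr.
  by apply/ltW/divr_gt0; rewrite ?mulr_gt0 ?ltr_pwDr.
exists z => //; rewrite Hfun_factor // mul0r subr0 (lt_le_trans p_lt) // (le_trans zA) //.
have -> : A * z / 2 = z / z `^ delta * (A * z `^ delta / 2) by field; rewrite gt_eqF.
apply: ler_wpM2l; first by rewrite divr_ge0 ?(ltW z_gt0) ?(ltW w_gt0).
by move: wD; rewrite ler_pdivrMr // => wD; lra.
Qed.

Lemma Hmax_large p : exists2 B, 0 < B < Bcrit & p < Hm B.
Proof.
have [z z_gt0 pz] := Hfun0_unbounded p.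
set g := Hfun A 0 D delta z - p; set m := z * z `^ delta.
have g_gt0 : 0 < g by rewrite subr_gt0.
have m_gt0 : 0 < m by rewrite mulr_gt0 ?powR_gt0.
set B := Num.min (Bcrit / 2) (g / (2 * m)).
have Bc := Bcrit_gt0.
have B_gt0 : 0 < B by rewrite lt_min !divr_gt0 ?mulr_gt0 ?powR_gt0.
have B_lt : B < Bcrit by rewrite gt_min; apply/orP; left; lra.
exists B; first by rewrite B_gt0.
apply: (lt_le_trans _ (Hfun_le_Hmax B_gt0 B_lt z z_gt0)).
rewrite (HfunB _ 0) // subr0 -/m.
have : B * m <= g / 2.
  by rewrite -ler_pdivlMr // -mulrA -invfM ge_min lexx orbT.
by rewrite /g; lra.
Qed.

Lemma Hmax_onto p : 0 < p -> exists2 B, 0 < B < Bcrit & Hm B = p.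
Proof.
move=> p_gt0; have [Blo /andP[Blo_gt0 Blo_lt] p_lt] := Hmax_large p.
have [Bhi [Bhi_p Blo_Bhi Bhi_lt]] : exists Bhi, [/\ Hm Bhi < p, Blo < Bhi & Bhi < Bcrit].
  apply: (@filter_ex _ (Bcrit^'-)); near=> B; split.
  - by near: B; exact: (Hmax_cvg0 _ (nbhs_right_lt p_gt0)).
  - by near: B; exact: nbhs_left_gt.
  - by near: B; exact: nbhs_left_lt.
have [B Bin HB] : exists2 B, B \in `[Blo, Bhi] & Hm B = p.
  apply: IVT; first exact: ltW.
    apply: continuous_in_subspaceT => B; rewrite inE /= in_itv /= => /andP[BloB BBhi].
    by apply: continuous_Hmax; [exact: lt_le_trans BloB | exact: le_lt_trans Bhi_lt].
  by apply/andP; split; [rewrite ge_min (ltW Bhi_p) orbT | rewrite le_max (ltW p_lt)].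
exists B => //; move: Bin; rewrite in_itv /= => /andP[BloB BBhi].
by rewrite (lt_le_trans Blo_gt0) // (le_lt_trans BBhi).
Unshelve. all: end_near. Qed.

Lemma Hmax_inverse : exists Bp : R -> R,
  forall p, 0 < p -> 0 < Bp p < Bcrit /\ Hm (Bp p) = p.
Proof.
have /choice[Bp BpP] : forall p, exists B, 0 < p -> 0 < B < Bcrit /\ Hm B = p.
  move=> p; have [p_gt0|p_le0] := ltP 0 p; last by exists 0.
  by have [B B_in HB] := Hmax_onto p p_gt0; exists B.
by exists Bp.
Qed.

Lemma Hmax_inverse_cvg (Bp : R -> R) :
  (forall p, 0 < p -> 0 < Bp p < Bcrit /\ Hm (Bp p) = p) -> Bp p @[p --> 0^'+] --> Bcrit.
Proof.
move=> BpP; apply/cvgrPdist_lt => e e_gt0.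
set b := Num.max (Bcrit / 2) (Bcrit - e / 2).
have Bc := Bcrit_gt0.
have b_gt0 : 0 < b by rewrite lt_max divr_gt0.
have b_lt : b < Bcrit by rewrite gt_max; apply/andP; split; lra.
have b_ge : Bcrit - e / 2 <= b by rewrite le_max lexx orbT.
near=> p.
have p_gt0 : 0 < p by near: p; exact: nbhs_right_gt.
have p_lt : p < Hm b by near: p; exact: nbhs_right_lt (Hmax_gt0 b_gt0 b_lt).
have [/andP[Bp_gt0 Bp_lt] HBp] := BpP p p_gt0.
have b_Bp : b < Bp p.
  rewrite ltNge; apply/negP => Bp_b.
  by have := Hmax_antimono Bp_gt0 Bp_b b_lt; rewrite HBp leNgt p_lt.
rewrite ger0_norm ?subr_ge0 ?ltW //; lra.
Unshelve. all: end_near. Qed.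

End profile.

Theorem lemma3p2 (R : realType) (delta A D : R) :
  0 < delta < 1 -> 0 < A -> 0 < D ->
  let c := A ^+ 2 / (4 * D) in
  (exists mu nu : R -> R,
     (forall B : R, 0 < B < c ->
        0 < Hmax A B D delta /\
        [set z : R | 0 < z /\ 0 < Hfun A B D delta z] = `]mu B, nu B[%classic /\
        (exists2 z0 : R, mu B < z0 < nu B & Hmax A B D delta = Hfun A B D delta z0)) /\
     (Hmax A B D delta @[B --> c^'-] --> 0^'+) /\
     (nu B - mu B @[B --> c^'-] --> 0^'+)) /\
  (exists Bp : R -> R,
     (forall p : R, 0 < p -> 0 < Bp p < c /\ Hmax A (Bp p) D delta = p) /\
     (Bp p @[p --> 0^'+] --> c)).
Proof.
move=> /andP[delta_gt0 _] A_gt0 D_gt0 c; split.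
  exists (mu delta A D), (nu delta A D); split; last first.
    by split; [exact: Hmax_cvg0 | exact: width_cvg0].
  move=> B /andP[B_gt0 B_lt]; split; first exact: Hmax_gt0.
  by split; [exact: Hfun_pos_set | exact: Hmax_attained].
have [Bp BpP] := Hmax_inverse delta A D delta_gt0 A_gt0 D_gt0.
exists Bp; split; first exact: BpP.
exact: Hmax_inverse_cvg delta A D delta_gt0 A_gt0 D_gt0 Bp BpP.
Qed.
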